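(* Let $n\ge 2$ and let $A$ be an associative (not necessarily unital) algebra over a field which is generalized commutative of degree $n$, i.e. $A$ satisfies the identity $x_1x_2\cdots x_n=x_nx_{n-1}\cdots x_1$. If $n\not\equiv 1 \pmod 4$, then $A$ is eventually commutative of degree $n+1$; otherwise (if $n\equiv 1\pmod 4$), $A$ is eventually commutative of degree $n+2$.
   Context: An algebra $A$ satisfies an identity $x_1\cdots x_m=x_{\tau(1)}\cdots x_{\tau(m)}$ (with $\tau\in S_m$) if $a_1\cdots a_m=a_{\tau(1)}\cdots a_{\tau(m)}$ for all $a_1,\dots,a_m\in A$. $A$ is eventually commutative of degree $k$ if it satisfies $x_1\cdots x_k=x_{\tau(1)}\cdots x_{\tau(k)}$ for every $\tau\in S_k$. *)

From mathcomp Require Import all_boot all_order all_algebra all_fingroup.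
Set Implicit Arguments. Unset Strict Implicit. Unset Printing Implicit Defensive.
Import GRing.Theory.
Local Open Scope ring_scope.

Definition assoc_algebra (K : fieldType) (A : lmodType K) (mul : A -> A -> A) : Prop :=
  [/\ (forall x y z : A, mul x (mul y z) = mul (mul x y) z),
      (forall (k : K) (x y z : A), mul (k *: x + y) z = k *: mul x z + mul y z)
    & (forall (k : K) (x y z : A), mul z (k *: x + y) = k *: mul z x + mul z y)].

(* Left-nested product x_1 x_2 ... x_m of a nonempty sequence
   (associativity makes the bracketing irrelevant); the empty product is
   never used (all degrees considered are >= 1). *)
Definition seqprod (T : Type) (mul : T -> T -> T) (d : T) (s : seq T) : T :=
  if s is x :: s' then foldl mul x s' else d.

Definition satisfies_identity (K : fieldType) (A : lmodType K) (mul : A -> A -> A)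
  (m : nat) (tau : 'S_m) : Prop :=
  forall a : 'I_m -> A,
    seqprod mul 0 [seq a i | i <- enum 'I_m] = seqprod mul 0 [seq a (tau i) | i <- enum 'I_m].

Definition eventually_commutative (K : fieldType) (A : lmodType K) (mul : A -> A -> A)
  (k : nat) : Prop :=
  forall tau : 'S_k, satisfies_identity mul tau.

Definition generalized_commutative (K : fieldType) (A : lmodType K) (mul : A -> A -> A)
  (n : nat) : Prop :=
  forall a : 'I_n -> A,
    seqprod mul 0 [seq a i | i <- enum 'I_n] = seqprod mul 0 [seq a (rev_ord i) | i <- enum 'I_n].

(* Call a permutation of the letters harmless if it never changes the product of
   a word.  If words of length n are reversible, then in a word of length n+1 any
   adjacent swap yields the product of the reversed word (glue the two letters
   into one of n blocks and reverse the blocks).  Comparing two overlapping swaps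
   shows that cyclic shifts of three consecutive letters are harmless, also at
   length n+2 since they act inside a subword.  These shifts generate the even
   permutations: a letter jumps over any block of even length and a block of
   length divisible by 4 can be reversed.  It remains to exhibit one harmless
   adjacent swap.  For n = 0, 3 (mod 4) the reversal of a word of length n+1 is
   even, so every swap is harmless; for n = 2 reverse a prefix of length n; for
   n = 1 reverse the n blocks xy, uw, z_1, ..., z_(n-2) of a word of length n+2.
   Adjacent swaps generate all permutations. *)

From Pilot Require Import Defs.
From mathcomp Require Import all_boot all_order all_algebra all_fingroup zify.

Set Implicit Arguments.
Unset Strict Implicit.
Unset Printing Implicit Defensive.

Section WordProducts.

Variables (T : eqType) (mul : T -> T -> T) (d : T).
Hypothesis mulA : associative mul.

Local Notation P := (Defs.seqprod mul d).
Local Arguments Defs.seqprod : simpl never.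

Lemma seqprod_cat u w : u != [::] -> w != [::] -> P (u ++ w) = mul (P u) (P w).
Proof.
case: u => [|x u] // _; case: w => [|y w] // _.
rewrite /Defs.seqprod /= foldl_cat /=.
by elim: w (foldl mul x u) y => [|z w IH] a b //=; rewrite -IH mulA.
Qed.

Lemma seqprod_cons x s : s != [::] -> P (x :: s) = mul x (P s).
Proof. exact: (@seqprod_cat [:: x]). Qed.

Lemma seqprod_rcons s x : s != [::] -> P (rcons s x) = mul (P s) x.
Proof. by rewrite -cats1 => ns; apply: seqprod_cat. Qed.

Lemma seqprod_flatten (bs : seq (seq T)) : bs != [::] -> all (predC1 [::]) bs ->
  P (flatten bs) = P (map P bs).
Proof.
elim: bs => [|b [|b' bs] IH] // _ /andP[nb nbs]; first by rewrite /= cats0.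
have nf : flatten (b' :: bs) != [::] by case/andP: nbs; case: (b').
rewrite [flatten _]/= seqprod_cat // IH //.
by rewrite -[RHS]/(P ([:: P b] ++ map P (b' :: bs))) seqprod_cat.
Qed.

Definition reversible L := forall s, size s = L -> P s = P (rev s).

Definition swap_invariant L := forall c x y e, size c + size e + 2 = L ->
  P (c ++ x :: y :: e) = P (c ++ y :: x :: e).

Definition rotate3_invariant L := forall c x y z e, size c + size e + 3 = L ->
  P (c ++ x :: y :: z :: e) = P (c ++ y :: z :: x :: e).

Lemma swap_invariant_move_past L c x s e :
  swap_invariant L -> size c + size s + size e + 1 = L ->
  P (c ++ x :: s ++ e) = P (c ++ s ++ x :: e).
Proof.
move=> swap_L; elim: s c => [|y s IH] c //= size_cse.
rewrite swap_L; last by rewrite size_cat /=; lia.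
by have := IH (c ++ [:: y]); rewrite -!catA /=; apply; rewrite size_cat /=; lia.
Qed.

Lemma swap_invariant_perm L s t :
  swap_invariant L -> size s = L -> perm_eq s t -> P s = P t.
Proof.
move=> swap_L.
suff perm_suffix c : size (c ++ s) = L -> perm_eq s t -> P (c ++ s) = P (c ++ t).
  by apply: perm_suffix [::].
elim: s t c => [|x s IH] t c size_cs st.
  by move: st; rewrite perm_sym => /perm_nilP ->.
have xt : x \in t by rewrite -(perm_mem st) mem_head.
move: st; case/splitPr: xt => t1 t2.
rewrite perm_sym -[_ :: t2]cat1s perm_catCA /= perm_cons perm_sym => st.
have := IH (t1 ++ t2) (c ++ [:: x]); rewrite -!catA /= => -> //.
apply: swap_invariant_move_past swap_L _.
by move: size_cs; rewrite !size_cat /= (perm_size st) size_cat; lia.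
Qed.

Lemma reversible_blocks n bs : reversible n -> size bs = n -> all (predC1 [::]) bs ->
  P (flatten bs) = P (flatten (rev bs)).
Proof.
case: bs => [|b bs] // rev_n size_bs nbs.
rewrite !seqprod_flatten ?all_rev // ?map_rev -?rev_n ?size_map //.
by rewrite rev_cons; case: (rev bs).
Qed.

Lemma reversible_swap n c x y e : reversible n -> size c + size e + 1 = n ->
  P (c ++ y :: x :: e) = P (rev (c ++ x :: y :: e)).
Proof.
move=> rev_n size_ce.
pose bs := [seq [:: z] | z <- c] ++ [:: y; x] :: [seq [:: z] | z <- e].
have -> : c ++ y :: x :: e = flatten bs by rewrite flatten_cat /= !flatten_seq1.
have -> : rev (c ++ x :: y :: e) = flatten (rev bs).
  rewrite /bs !rev_cat !rev_cons -!map_rev -!cats1.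
  by rewrite !flatten_cat /= !flatten_seq1 -!catA.
apply: reversible_blocks rev_n _ _; first by rewrite size_cat /= !size_map; lia.
by rewrite all_cat /= !all_map; apply/andP; split; apply/allP.
Qed.

Lemma reversible_pairs n x y u w e : reversible n -> size e + 2 = n ->
  P (x :: y :: u :: w :: e) = P (rev e ++ [:: u; w; x; y]).
Proof.
move=> rev_n size_e.
have := reversible_blocks (bs := [:: x; y] :: [:: u; w] :: [seq [:: z] | z <- e]) rev_n.
rewrite !rev_cons -map_rev -!cats1 !flatten_cat /= !flatten_seq1 -!catA /=.
apply; first by rewrite /= size_map; lia.
by rewrite /= all_map; apply/allP.
Qed.

Lemma rotate3_of_reversible n : reversible n -> rotate3_invariant n.+1.
Proof.
move=> rev_n c x y z e size_ce.
rewrite (@reversible_swap _ c y x (z :: e) rev_n) /=; last by lia.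
have := @reversible_swap _ (c ++ [:: y]) x z e rev_n.
by rewrite -!catA /= => <- //; rewrite size_cat /=; lia.
Qed.

Lemma swap_invariant_of_reversible n :
  reversible n -> reversible n.+1 -> swap_invariant n.+1.
Proof.
move=> rev_n rev_n1 c x y e size_ce.
by rewrite (reversible_swap _ _ rev_n) -?rev_n1 // ?size_cat /=; lia.
Qed.

Lemma rotate3_invariantS L : 3 <= L -> rotate3_invariant L -> rotate3_invariant L.+1.
Proof.
move=> L3 rot [|a c] x y z e size_ce; last first.
  have nonnil u s : c ++ u :: s != [::] by case: (c).
  rewrite !cat_cons !seqprod_cons ?nonnil // rot //; move: size_ce => /=; lia.
case/lastP: e size_ce => [|e a] size_ce; first by move: size_ce => /=; lia.
rewrite /= -!rcons_cons !seqprod_rcons // (rot [::]) //.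
by move: size_ce; rewrite /= size_rcons; lia.
Qed.

Section Rotate3Invariant.

Variable L : nat.
Hypothesis rot : rotate3_invariant L.

Lemma move_past_even c x s e : 2 %| size s -> size c + size s + size e + 1 = L ->
  P (c ++ x :: s ++ e) = P (c ++ s ++ x :: e).
Proof.
case/dvdnP=> k; elim: k s c => [|k IH] [|y [|z s]] c //= size_s size_cse; try lia.
rewrite (@rot c x y z (s ++ e)); last by rewrite size_cat; lia.
have := IH s (c ++ [:: y; z]); rewrite -!catA /=; apply; rewrite ?size_cat /=; lia.
Qed.

Lemma swap_even_block c u s e : 2 %| size s -> size c + size u + size s + size e = L ->
  P (c ++ u ++ s ++ e) = P (c ++ s ++ u ++ e).
Proof.
move=> even_s; elim: u c => [|x u IH] c //= size_cuse.
have := IH (c ++ [:: x]); rewrite -!catA /= => ->; last by rewrite size_cat /=; lia.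
by rewrite move_past_even // size_cat; lia.
Qed.

Lemma rev_block4 c s e : 4 %| size s -> size c + size s + size e = L ->
  P (c ++ rev s ++ e) = P (c ++ s ++ e).
Proof.
case/dvdnP=> k; elim: k s c e => [|k IH] [|x [|y [|z [|w s]]]] c e //= size_s size_cse;
  try lia.
have rev4 : P (c ++ [:: w; z; y; x] ++ s ++ e) = P (c ++ [:: x; y; z; w] ++ s ++ e).
  rewrite /= (@rot c w z y (x :: s ++ e)) /=; last by rewrite size_cat; lia.
  have := @rot (c ++ [:: z]) x y w (s ++ e); rewrite -!catA /= => <-;
    last by rewrite !size_cat /=; lia.
  by rewrite (@rot c z x y (w :: s ++ e)) //= size_cat; lia.
have -> : rev [:: x, y, z, w & s] = rev s ++ [:: w; z; y; x].
  by rewrite -[x :: _]/([:: x; y; z; w] ++ s) rev_cat.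
rewrite -catA swap_even_block ?size_cat ?size_rev //=; last by lia.
rewrite -[RHS]rev4; have := IH s (c ++ [:: w; z; y; x]) e.
by rewrite -!catA; apply; rewrite ?size_cat /=; lia.
Qed.

Lemma rev_block_swap c s x y t e : 4 %| size s -> size t <= 1 ->
  size c + size s + size t + size e + 2 = L ->
  P (c ++ rev (s ++ x :: y :: t) ++ e) = P (c ++ s ++ y :: x :: t ++ e).
Proof.
move=> s4 t1 size_L.
rewrite rev_cat -catA catA rev_block4 // -?catA ?size_cat ?size_rev /=; last by lia.
rewrite swap_even_block ?size_cat ?size_rev /=; [|lia|lia].
case: t t1 size_L => [|r [|]] //= _ size_L; rewrite /rev /=.
by have := @rot (c ++ s) r y x e; rewrite -!catA; apply; rewrite size_cat; lia.
Qed.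

Lemma reversible_of_rotate3 : L %% 4 <= 1 -> reversible L.
Proof.
move=> L01 s size_s.
have [L4 | L1] : 4 %| L \/ L %% 4 = 1 by lia.
  by have := @rev_block4 [::] s [::]; rewrite !cats0 => ->; rewrite //=; lia.
case: s size_s => [|x s] /= size_s; first by move: L1; rewrite -size_s.
have := @move_past_even [::] x s [::]; rewrite !cats0 => -> /=; [|lia|lia].
by have := @rev_block4 [::] s [:: x]; rewrite rev_cons -cats1 => ->; rewrite //=; lia.
Qed.

Lemma swap_invariant_of_rotate3 i : i.+1 < L ->
  (forall c x y e, size c = i -> size c + size e + 2 = L ->
     P (c ++ x :: y :: e) = P (c ++ y :: x :: e)) ->
  swap_invariant L.
Proof.
move=> iL swap_i c x y e size_ce; set w := c ++ e.
have size_w : size w = L - 2 by rewrite size_cat; lia.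
have size_take_w : size (take i w) = i by rewrite size_takel // size_w; lia.
have size_drop_w : size (drop i w) = L - 2 - i by rewrite size_drop size_w.
have move_pair a b : P (c ++ a :: b :: e) = P (take i w ++ a :: b :: drop i w).
  transitivity (P ([:: a; b] ++ w)).
    by apply: (@swap_even_block [::] c [:: a; b] e) => //=; lia.
  rewrite -[in LHS](cat_take_drop i w); symmetry.
  apply: (@swap_even_block [::] (take i w) [:: a; b]) => //=.
  by rewrite size_take_w size_drop_w; lia.
by rewrite !move_pair swap_i // size_drop_w; lia.
Qed.

End Rotate3Invariant.

Lemma swap_invariantS_of_reversible n :
  n %% 4 != 1 -> reversible n -> swap_invariant n.+1.
Proof.
move=> n_not1 rev_n; have rot := rotate3_of_reversible rev_n.
have [n03 | n2mod] : n.+1 %% 4 <= 1 \/ n %% 4 = 2 by lia.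
  exact/(swap_invariant_of_reversible rev_n)/(reversible_of_rotate3 rot).
apply: (swap_invariant_of_rotate3 rot (i := n - 2)) => [|c x y e size_c size_ce];
  first lia.
case: e size_ce => [|z [|]] //= size_ce; try lia.
have rev_prefix w : size w = n -> P (w ++ [:: z]) = P (rev w ++ [:: z]).
  move=> size_w; have nw : w != [::] by rewrite -size_eq0 size_w; lia.
  by rewrite !seqprod_cat -?rev_n // -size_eq0 size_rev size_eq0.
rewrite -[c ++ _]/(c ++ [:: x; y] ++ [:: z]) catA rev_prefix;
  last by rewrite size_cat /=; lia.
have := @rev_block_swap _ rot [::] c x y [::] [:: z].
by rewrite /= => -> //; lia.
Qed.

Lemma swap_invariantSS_of_reversible n :
  2 <= n -> n %% 4 = 1 -> reversible n -> swap_invariant n.+2.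
Proof.
move=> n2 n1 rev_n.
have rot : rotate3_invariant n.+2.
  by apply: rotate3_invariantS (rotate3_of_reversible rev_n); lia.
apply: (swap_invariant_of_rotate3 rot (i := n - 1)) => [|c a b e size_c size_ce];
  first lia.
case: e size_ce => [|r [|]] //= size_ce; try lia.
case: c size_c size_ce => [|x [|y [|u [|w s]]]] //= size_s size_ce; try lia.
rewrite (reversible_pairs x y u w rev_n); last by rewrite size_cat /=; lia.
have := @swap_even_block _ rot [::] (rev (s ++ [:: a; b; r])) [:: u; w; x; y] [::].
rewrite !cats0 => -> //; last by rewrite /= size_rev size_cat /=; lia.
rewrite (@swap_even_block _ rot [::] [:: u; w] [:: x; y]) //;
  last by rewrite /= size_rev size_cat /=; lia.
have := @rev_block_swap _ rot [:: x; y; u; w] s a b [:: r] [::].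
by rewrite !cats0 => ->; rewrite //=; lia.
Qed.

End WordProducts.

Lemma map_nth_enum_ord (T : Type) (x0 : T) s :
  [seq nth x0 s i | i : 'I_(size s) <- enum 'I_(size s)] = s.
Proof. by rewrite -[RHS](mkseq_nth x0) /mkseq -val_enum_ord -map_comp. Qed.

Lemma map_nth_rev_enum_ord (T : Type) (x0 : T) s :
  [seq nth x0 s (rev_ord i) | i : 'I_(size s) <- enum 'I_(size s)] = rev s.
Proof.
rewrite -[RHS](mkseq_nth x0) size_rev /mkseq -val_enum_ord -map_comp.
by apply: eq_map => i /=; rewrite nth_rev.
Qed.

Lemma perm_enum_map_perm (T : finType) (tau : {perm T}) :
  perm_eq (enum T) [seq tau x | x <- enum T].
Proof.
apply: uniq_perm; first exact: enum_uniq.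
  by rewrite map_inj_uniq ?enum_uniq //; exact: perm_inj.
move=> x; rewrite mem_enum; apply/esym/mapP.
by exists ((tau^-1)%g x); rewrite ?mem_enum ?permKV.
Qed.

Section Algebra.

Variables (K : fieldType) (A : lmodType K) (mul : A -> A -> A).

Lemma reversible_of_generalized_commutative n :
  generalized_commutative mul n -> reversible mul 0%R n.
Proof.
move=> gc s size_s; subst n.
by have := gc (nth 0%R s); rewrite map_nth_enum_ord map_nth_rev_enum_ord.
Qed.

Lemma eventually_commutative_of_swap_invariant L :
  swap_invariant mul 0%R L -> eventually_commutative mul L.
Proof.
move=> swap_L tau a; apply: swap_invariant_perm swap_L _ _.
  by rewrite size_map size_enum_ord.
by rewrite (map_comp a tau) perm_map // perm_enum_map_perm.
Qed.

End Algebra.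

Theorem theorem3p4 (K : fieldType) (A : lmodType K) (mul : A -> A -> A) (n : nat) :
  (2 <= n)%N -> assoc_algebra mul -> generalized_commutative mul n ->
  (n %% 4 != 1 -> eventually_commutative mul n.+1)%N /\
  (n %% 4 = 1 -> eventually_commutative mul n.+2)%N.
Proof.
move=> n2 [mulA _ _] /reversible_of_generalized_commutative rev_n.
split=> n1; apply: eventually_commutative_of_swap_invariant.
  exact: swap_invariantS_of_reversible.
exact: swap_invariantSS_of_reversible.
Qed.
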